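(* Let $0\to\mathfrak{r}\to\mathfrak{f}\to\mathfrak{g}\to0$ be a free presentation of a Leibniz algebra $\mathfrak{g}$. Then for every $\mathrm{Lie}$-stem extension $0\to\mathfrak{m}\to\mathfrak{p}\to\mathfrak{g}\to0$ of $\mathfrak{g}$, the Leibniz algebra $\mathfrak{p}$ is an epimorphic image of $\mathfrak{f}/[\mathfrak{f},\mathfrak{r}]_{\mathrm{Lie}}$.
   Context: Fix a field $\mathbb{K}$ with $\frac12\in\mathbb{K}$. A Leibniz algebra is a $\mathbb{K}$-vector space with a bilinear bracket satisfying $[x,[y,z]]=[[x,y],z]-[[x,z],y]$. $\mathfrak{p}^{\mathrm{ann}}$ is the span of all $[x,x]$, $\mathfrak{p}_{\mathrm{Lie}}=\mathfrak{p}/\mathfrak{p}^{\mathrm{ann}}$. $[\mathfrak{m},\mathfrak{n}]_{\mathrm{Lie}}$ is the span of all $[m,n]+[n,m]$. $Z_{\mathrm{Lie}}(\mathfrak{p})=\{z:[x,z]+[z,x]=0\ \forall x\}$. An extension $0\to\mathfrak{m}\to\mathfrak{p}\to\mathfrak{g}\to0$ is a $\mathrm{Lie}$-stem extension if $\mathfrak{m}\subseteq Z_{\mathrm{Lie}}(\mathfrak{p})$ and the induced map $\mathfrak{p}_{\mathrm{Lie}}\to\mathfrak{g}_{\mathrm{Lie}}$ is an isomorphism. A free presentation is a short exact sequence $0\to\mathfrak{r}\to\mathfrak{f}\to\mathfrak{g}\to0$ with $\mathfrak{f}$ a free Leibniz algebra. *)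

From HB Require Import structures.
From mathcomp Require Import all_boot all_order all_algebra.
Set Implicit Arguments. Unset Strict Implicit. Unset Printing Implicit Defensive.
Import GRing.Theory.
Local Open Scope ring_scope.

Record leibnizAlgebra (K : fieldType) := LeibnizAlgebra {
  lcarrier :> lmodType K;
  lbr : lcarrier -> lcarrier -> lcarrier;
  lbr_linl : forall (a : K) (x y z : lcarrier),
      lbr (a *: x + y) z = a *: lbr x z + lbr y z;
  lbr_linr : forall (a : K) (x y z : lcarrier),
      lbr z (a *: x + y) = a *: lbr z x + lbr z y;
  lbr_leibniz : forall x y z : lcarrier,
      lbr x (lbr y z) = lbr (lbr x y) z - lbr (lbr x z) y
}.

Section Defs.
Variable K : fieldType.

Definition span (V : lmodType K) (S : V -> Prop) : V -> Prop :=
  fun v => exists s : seq (K * V),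
    (forall c, c \in s -> S c.2) /\ v = \sum_(c <- s) c.1 *: c.2.

Definition is_hom (A B : leibnizAlgebra K) (phi : A -> B) : Prop :=
  (forall (a : K) (x y : A), phi (a *: x + y) = a *: phi x + phi y) /\
  (forall x y : A, phi (lbr x y) = lbr (phi x) (phi y)).

Definition surj (A B : Type) (phi : A -> B) : Prop := forall b, exists a, phi a = b.

Definition is_free (F : leibnizAlgebra K) : Prop :=
  exists (X : Type) (i : X -> F),
    forall (L : leibnizAlgebra K) (h : X -> L),
      (exists phi : F -> L, is_hom phi /\ forall x, phi (i x) = h x) /\
      (forall phi psi : F -> L, is_hom phi -> is_hom psi ->
         (forall x, phi (i x) = h x) -> (forall x, psi (i x) = h x) ->
         forall y, phi y = psi y).

Definition ann (P : leibnizAlgebra K) : P -> Prop :=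
  span (fun v : P => exists x : P, v = lbr x x).

Definition lie_comm (P : leibnizAlgebra K) (M N : P -> Prop) : P -> Prop :=
  span (fun v : P => exists m n, M m /\ N n /\ v = lbr m n + lbr n m).

Definition lie_center (P : leibnizAlgebra K) : P -> Prop :=
  fun z => forall x : P, lbr x z + lbr z x = 0.

(* Lie-stem extension 0 -> m -> p -> g -> 0, with m identified with the kernel
   of the surjective homomorphism sigma : p -> g.  The induced map
   p_Lie = p/p^ann -> g_Lie = g/g^ann (well defined since sigma maps p^ann
   into g^ann) is surjective as sigma is; it is injective iff
   sigma^{-1}(g^ann) is contained in p^ann. *)
Definition lie_stem (P G : leibnizAlgebra K) (sigma : P -> G) : Prop :=
  [/\ is_hom sigma, surj sigma,
      (forall z : P, sigma z = 0 -> lie_center z) &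
      (forall x : P, ann (sigma x) -> ann x)].

End Defs.

(* Lift the generators of the free algebra f along the surjection p -> g to get
   phi : f -> p over f -> g.  Then phi maps r into the kernel m, which lies in
   Z_Lie(p), so phi kills [f, r]_Lie.  The image of phi together with m spans p;
   and m lies in p^ann because it maps into g^ann.  Every square [y, y] is in the
   image of phi: writing y = phi a + z with z in m, the cross terms cancel since
   z is Lie-central, and [z, z] = 0 because 2 is invertible. *)

From Pilot Require Import Defs.
From mathcomp Require Import all_boot all_order all_algebra.
From Stdlib Require Import ClassicalEpsilon.
Import GRing.Theory.
Local Open Scope ring_scope.

Set Implicit Arguments. Unset Strict Implicit.

Section LeibnizBasics.
Variable K : fieldType.

Lemma span0 (V : lmodType K) (S : V -> Prop) : Defs.span S 0.
Proof. by exists [::]; rewrite big_nil. Qed.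

Lemma span_ind (V : lmodType K) (S T : V -> Prop) :
  T 0 -> (forall a x y, T x -> T y -> T (a *: x + y)) ->
  (forall v, S v -> T v) -> forall v, Defs.span S v -> T v.
Proof.
move=> T0 TD ST v [s [sS ->]]; elim: s sS => [|c s IHs] sS.
  by rewrite big_nil.
rewrite big_cons; apply: TD; first exact/ST/sS/mem_head.
by apply: IHs => d ds; apply/sS; rewrite in_cons ds orbT.
Qed.

Section Hom.
Variables (A B : leibnizAlgebra K) (f : A -> B).
Hypothesis f_hom : is_hom f.

Lemma homD x y : f (x + y) = f x + f y.
Proof. by rewrite -[x in LHS]scale1r f_hom.1 scale1r. Qed.

Lemma hom0 : f 0 = 0.
Proof. by apply/(addrI (f 0)); rewrite -homD !addr0. Qed.

Lemma homZ a x : f (a *: x) = a *: f x.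
Proof. by rewrite -[a *: x]addr0 f_hom.1 hom0 addr0. Qed.

Lemma homB x y : f (x - y) = f x - f y.
Proof. by rewrite -scaleN1r homD homZ scaleN1r. Qed.

End Hom.

Lemma is_hom_comp (A B C : leibnizAlgebra K) (f : A -> B) (g : B -> C) :
  is_hom f -> is_hom g -> is_hom (fun x => g (f x)).
Proof.
move=> [fZD fM] [gZD gM]; split=> [a x y|x y]; first by rewrite fZD gZD.
by rewrite fM gM.
Qed.

Lemma lbrDl (A : leibnizAlgebra K) (x y z : A) :
  lbr (x + y) z = lbr x z + lbr y z.
Proof. by rewrite -[x in LHS]scale1r lbr_linl scale1r. Qed.

Lemma lbrDr (A : leibnizAlgebra K) (x y z : A) :
  lbr z (x + y) = lbr z x + lbr z y.
Proof. by rewrite -[x in LHS]scale1r lbr_linr scale1r. Qed.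

Lemma lie_center_lbr_self (A : leibnizAlgebra K) (z : A) :
  (2%:R : K) != 0 -> lie_center z -> lbr z z = 0.
Proof.
move=> two_neq0 /(_ z) /eqP.
by rewrite -mulr2n -scaler_nat scaler_eq0 (negbTE two_neq0) => /eqP.
Qed.

Lemma lbr_self_addr_center (A : leibnizAlgebra K) (y z : A) :
  (2%:R : K) != 0 -> lie_center z -> lbr (y + z) (y + z) = lbr y y.
Proof.
move=> two_neq0 zC.
by rewrite !lbrDl !lbrDr (lie_center_lbr_self two_neq0 zC) addr0 -addrA zC addr0.
Qed.

Lemma free_lift (F G P : leibnizAlgebra K) (pi : F -> G) (sigma : P -> G) :
  is_free F -> is_hom pi -> is_hom sigma -> surj sigma ->
  exists phi : F -> P, is_hom phi /\ forall y, sigma (phi y) = pi y.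
Proof.
move=> [X [i F_free]] pi_hom sigma_hom sigma_surj.
have [h sigma_h] := choice (fun x p => sigma p = pi (i x)) (fun x => sigma_surj _).
have [[phi [phi_hom phi_i]] _] := F_free P h.
exists phi; split=> // y.
have [_ uniq_ext] := F_free G (fun x => pi (i x)).
apply: (uniq_ext _ _ (is_hom_comp phi_hom sigma_hom) pi_hom) => // x.
by rewrite phi_i sigma_h.
Qed.

End LeibnizBasics.

Section LiftAlongLieStem.
Variables (K : fieldType) (F G P : leibnizAlgebra K).
Variables (pi : F -> G) (sigma : P -> G) (phi : F -> P).
Hypotheses (two_neq0 : (2%:R : K) != 0) (pi_surj : surj pi).
Hypotheses (stem : lie_stem sigma) (phi_hom : is_hom phi).
Hypothesis sigma_phi : forall y, sigma (phi y) = pi y.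

Let in_image (p : P) := exists a, phi a = p.

Lemma lift_ker_center y : pi y = 0 -> lie_center (phi y).
Proof. by have [_ _ kerC _] := stem; move=> pi_y0; apply: kerC; rewrite sigma_phi. Qed.

Lemma lift_image_span (S : P -> Prop) :
  (forall p, S p -> in_image p) -> forall p, Defs.span S p -> in_image p.
Proof.
apply: span_ind => [|c _ _ [x <-] [y <-]]; first by exists 0; rewrite hom0.
by exists (c *: x + y); rewrite phi_hom.1.
Qed.

Lemma lift_ker_offset p : exists a, sigma (p - phi a) = 0.
Proof.
have [sigma_hom _ _ _] := stem; have [a pi_a] := pi_surj (sigma p).
by exists a; rewrite homB // sigma_phi pi_a subrr.
Qed.

Lemma lift_image_lbr_self y : in_image (lbr y y).
Proof.
have [_ _ kerC _] := stem; have [a /kerC yaC] := lift_ker_offset y.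
exists (lbr a a); rewrite phi_hom.2 -(lbr_self_addr_center (phi a) two_neq0 yaC).
by rewrite addrC subrK.
Qed.

Lemma lift_surj : surj phi.
Proof.
have [_ _ _ ann_refl] := stem; move=> p; have [a sigma0] := lift_ker_offset p.
have /ann_refl : ann (sigma (p - phi a)) by rewrite sigma0; apply: span0.
have squares_in_image q : (exists y, q = lbr y y) -> in_image q.
  by move=> [y ->]; apply: lift_image_lbr_self.
move/(lift_image_span squares_in_image) => [b phi_b].
by exists (a + b); rewrite homD // phi_b addrC subrK.
Qed.

Lemma lift_lie_comm_ker (v : F) :
  lie_comm (fun _ : F => True) (fun r : F => pi r = 0) v -> phi v = 0.
Proof.
apply: span_ind (fun v => phi v = 0) _ _ _ v => [|c x y phix0 phiy0|].
- exact: hom0.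
- by rewrite phi_hom.1 phix0 phiy0 scaler0 addr0.
- by move=> _ [m [n [_ [pi_n0 ->]]]]; rewrite homD // !phi_hom.2 lift_ker_center.
Qed.

End LiftAlongLieStem.

Theorem mainTheorem16 (K : fieldType) (hK : (2%:R : K) != 0)
  (F G : leibnizAlgebra K) (pi : F -> G) :
  is_free F -> is_hom pi -> surj pi ->
  forall (P : leibnizAlgebra K) (sigma : P -> G),
    lie_stem sigma ->
    exists phi : F -> P,
      [/\ is_hom phi, surj phi &
          forall v : F,
            lie_comm (fun _ : F => True) (fun r : F => pi r = 0) v -> phi v = 0].
Proof.
move=> F_free pi_hom pi_surj P sigma stem.
have [sigma_hom sigma_surj _ _] := stem.
have [phi [phi_hom sigma_phi]] := free_lift F_free pi_hom sigma_hom sigma_surj.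
exists phi; split=> //.
- exact: lift_surj hK pi_surj stem phi_hom sigma_phi.
- exact: lift_lie_comm_ker stem phi_hom sigma_phi.
Qed.
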